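(* Let $n\ge1$, $m\ge1$, $1\le j\le n$, and let $\Delta$ be the Newton polytope of $K^j_{n,m}=x_1^m+\dots+x_n^m+(x_1\cdots x_j)^{-1}$. For $0\le k\le nm$, $$W_\Delta(k)=\binom{n-1+k}{n-1}+\sum_{s=1}^j\beta(j,s)\sum_{\ell=1}^n\binom{k-\ell m+(n-j-1)}{n-s-1}+\alpha(j,k),$$ where $\beta(j,s)=\binom js$ except that $\beta(n,n)=0$; $\alpha(j,k)=0$ unless $j=n$ and $k$ is a positive multiple of $m$, in which case $\alpha(j,k)=1$; and binomial coefficients follow the convention $\binom ab=0$ whenever $a<b$ (in particular whenever $a<0$).
   Context: The Newton polytope $\Delta$ is the convex hull of $\vec0$, $-(e_1+\dots+e_j)$, and $me_1,\dots,me_n$; its denominator is $D(\Delta)=m$. The weight $w(u)$ of $u\in\mathbb{Q}^n$ is the least $c\in\mathbb Q_{\ge0}$ with $u\in c\Delta$ ($\infty$ if none), and $W_\Delta(k)=\#\{u\in\mathbb Z^n:w(u)=k/m\}$. *)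

From HB Require Import structures.
From mathcomp Require Import all_boot all_order all_algebra.
Unset Printing Implicit Defensive.
Import Order.TTheory GRing.Theory Num.Theory.
Local Open Scope ring_scope.

(* Delta = conv(0, -(e_1+..+e_j), m e_1, ..., m e_n) in Q^n (coordinates are
   indexed by 'I_n, so e_1..e_j are the indices i with i < j).
   u \in c * Delta  iff  u = c * (a0 * 0 + am * (-(e_1+..+e_j)) + sum_i a_i * m e_i)
   for some convex coefficients a0, am, a_i. *)
Definition in_scaled_Delta (n m j : nat) (c : rat) (u : 'I_n -> rat) : Prop :=
  exists (a0 am : rat) (a : 'I_n -> rat),
    [/\ 0 <= a0, 0 <= am, (forall i, 0 <= a i),
        a0 + am + \sum_(i < n) a i = 1 &
        forall i : 'I_n,
          u i = c * (a0 * 0 + am * (if (i < j)%N then -1 else 0) + a i * m%:R)].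

Definition weight_is (n m j : nat) (u : 'I_n -> int) (c : rat) : Prop :=
  [/\ 0 <= c,
      in_scaled_Delta n m j c (fun i => (u i)%:~R) &
      forall c' : rat, 0 <= c' ->
        in_scaled_Delta n m j c' (fun i => (u i)%:~R) -> c <= c'].

Definition W_Delta_is (n m j k : nat) (N : int) : Prop :=
  exists s : seq {ffun 'I_n -> int},
    [/\ uniq s,
        (forall u : {ffun 'I_n -> int},
            u \in s <-> weight_is n m j u (k%:R / m%:R)) &
        (size s)%:Z = N].

Definition binomZ (a b : int) : int :=
  if (b < 0) || (a < b) then 0 else ('C(`|a|%N, `|b|%N))%:Z.

Definition beta (n j s : nat) : int :=
  if (j == n) && (s == n) then 0 else ('C(j, s))%:Z.

Definition alpha (n m j k : nat) : int :=
  if [&& j == n, (0 < k)%N & (m %| k)%N] then 1 else 0.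

(* For u in Z^n let depth(u) = max(0, -u_1, ..., -u_j).  Writing u as a conic
   combination of the vertices of Delta shows that u lies in c * Delta iff u_{j+1}, ..., u_n
   are nonnegative and  level(u) := u_1 + ... + u_n + depth(u) * (m + j) <= c * m.  Hence
   w(u) = k/m iff u has a nonnegative tail and level(u) = k  (weight_level).

   Such points u correspond bijectively to pairs (t, w), where t = depth(u)
   satisfies t * m <= k and w = u + t * (e_1 + ... + e_j) is a weak composition of k - t * m
   into n parts in which, when t > 0, some of the first j parts vanishes (exact_depth).

   Weak compositions of N into n parts number C(N + n-1, n-1) (stars and bars,
   from the library), and those whose first j parts are positive number C(N - j + n-1, n-1).
   For t > 0 their difference is turned by Vandermonde's identity into the beta-weighted sum
   of the statement plus the correction [j = n and N = 0] (shell_termE); the shell t = 0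
   gives the leading binomial, and the corrections add up to alpha.  Summing over t yields
   the theorem. *)

From HB Require Import structures.
From mathcomp Require Import all_boot all_order all_algebra.
From mathcomp Require Import zify ring lra.
Import Order.TTheory GRing.Theory Num.Theory.
Set Implicit Arguments. Unset Strict Implicit.

Definition comps (n N : nat) : seq (seq nat) :=
  [seq map val (tval t) | t <- enum [set t : n.-tuple 'I_N.+1 | \sum_(i <- t) i == N]].

Lemma leq_sumn (w : seq nat) x : x \in w -> x <= sumn w.
Proof. by elim: w => //= y w IH; rewrite inE => /orP[/eqP->|/IH]; lia. Qed.

Lemma sumn_nth (w : seq nat) : sumn w = \sum_(i < size w) nth 0 w i.
Proof. by rewrite sumnE (big_nth 0) big_mkord. Qed.

Lemma mem_comps n N w : (w \in comps n N) = (size w == n) && (sumn w == N).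
Proof.
apply/mapP/andP => [[t] | [/eqP sw /eqP sumw]].
  by rewrite mem_enum inE => /eqP sumt ->; rewrite size_map size_tuple sumnE big_map sumt.
have inordK_w : map val (map (@inord N) w) = w.
  rewrite -map_comp -[RHS]map_id; apply/eq_in_map => x /leq_sumn xw /=.
  by rewrite inordK // ltnS -sumw.
have size_w : size (map (@inord N) w) == n by rewrite size_map sw.
exists (Tuple size_w) => //; rewrite mem_enum inE /=.
by rewrite -(big_map val xpredT id) -sumnE inordK_w sumw.
Qed.

Lemma uniq_comps n N : uniq (comps n N).
Proof.
rewrite map_inj_uniq ?enum_uniq // => t1 t2 /(inj_map val_inj).
exact: val_inj.
Qed.

Lemma size_comps n N : size (comps n.+1 N) = 'C(N + n, n).
Proof. by rewrite size_map -cardE card_ord_partitions addnC. Qed.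

(* Compositions whose first j parts are positive are, after subtracting 1 from each
   of those parts, the compositions of N - j: [bump_prefix] and [drop_prefix] are the
   two directions of this bijection. *)
Definition pos_prefix (j : nat) (w : seq nat) : bool := all (fun x => 0 < x) (take j w).

Fixpoint bump_prefix (j : nat) (w : seq nat) : seq nat :=
  if (j, w) is (j'.+1, x :: w') then x.+1 :: bump_prefix j' w' else w.

Fixpoint drop_prefix (j : nat) (w : seq nat) : seq nat :=
  if (j, w) is (j'.+1, x :: w') then x.-1 :: drop_prefix j' w' else w.

Lemma size_bump_prefix j w : size (bump_prefix j w) = size w.
Proof. by elim: j w => [|j IH] [|x w] //=; rewrite IH. Qed.

Lemma size_drop_prefix j w : size (drop_prefix j w) = size w.
Proof. by elim: j w => [|j IH] [|x w] //=; rewrite IH. Qed.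

Lemma sumn_bump_prefix j w : j <= size w -> sumn (bump_prefix j w) = sumn w + j.
Proof. by elim: j w => [|j IH] [|x w] //= jw; rewrite ?addn0 // IH //; lia. Qed.

Lemma sumn_drop_prefix j w : j <= size w -> pos_prefix j w ->
  sumn (drop_prefix j w) + j = sumn w.
Proof.
rewrite /pos_prefix; elim: j w => [|j IH] [|x w] //= jw; first by rewrite addn0.
by move=> /andP[x0 /(IH w jw)]; lia.
Qed.

Lemma pos_prefix_bump j w : pos_prefix j (bump_prefix j w).
Proof. by rewrite /pos_prefix; elim: j w => [|j IH] [|x w] //=. Qed.

Lemma bump_prefixK j : cancel (bump_prefix j) (drop_prefix j).
Proof. by elim: j => [|j IH] [|x w] //=; rewrite IH. Qed.

Lemma drop_prefixK j w : pos_prefix j w -> bump_prefix j (drop_prefix j w) = w.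
Proof.
rewrite /pos_prefix; elim: j w => [|j IH] [|x w] //= /andP[x0 /IH->].
by rewrite prednK.
Qed.

Lemma count_pos_prefix n N j : j <= n ->
  count (pos_prefix j) (comps n N) = if j <= N then size (comps n (N - j)) else 0.
Proof.
move=> jn; case: ifP => jN; last first.
  apply/eqP; rewrite -leqn0 leqNgt -has_count; apply/hasP => -[w].
  rewrite mem_comps => /andP[/eqP sw /eqP sumw] wpos.
  by have := @sumn_drop_prefix j w; rewrite sw sumw => /(_ jn wpos); lia.
rewrite -size_filter -[RHS](size_map (bump_prefix j)); apply/perm_size/uniq_perm.
- exact/filter_uniq/uniq_comps.
- by rewrite (map_inj_uniq (can_inj (@bump_prefixK j))) uniq_comps.
move=> w; rewrite mem_filter mem_comps; apply/idP/mapP.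
  move=> /and3P[wpos /eqP sw /eqP sumw]; exists (drop_prefix j w).
    rewrite mem_comps size_drop_prefix sw eqxx -sumw.
    by rewrite -(@sumn_drop_prefix j w) ?sw ?addnK ?eqxx.
  by rewrite drop_prefixK.
move=> [v]; rewrite mem_comps => /andP[/eqP sv /eqP sumv] ->.
rewrite pos_prefix_bump size_bump_prefix sv eqxx sumn_bump_prefix ?sv // sumv /=.
by apply/eqP; lia.
Qed.

Local Open Scope ring_scope.

(* Indicator of the first j coordinates, i.e. of the support of -(e_1 + ... + e_j). *)
Definition prefix_ind (j i : nat) : rat := if (i < j)%N then 1 else 0.

Lemma sum_prefix_ind n j : (j <= n)%N -> \sum_(i < n) prefix_ind j i = j%:R.
Proof.
move=> jn; rewrite -(big_mkord xpredT (prefix_ind j)) (big_cat_nat _ jn) //=.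
rewrite [X in _ + X]big1_seq ?addr0; last first.
  by move=> i /andP[_]; rewrite mem_index_iota => /andP[ji _]; rewrite /prefix_ind ltnNge ji.
rewrite (eq_big_seq (fun=> 1)); last by move=> i; rewrite mem_index_iota /prefix_ind => /andP[_ ->].
by rewrite sumr_const_nat subn0.
Qed.

Definition neg_part (x : int) : nat := if x < 0 then `|x|%N else 0.

Lemma neg_part_ge (x : int) : - x <= (neg_part x)%:Z.
Proof. by rewrite /neg_part; case: ltrP => x0; [rewrite abszE ltr0_norm | rewrite oppr_le0]. Qed.

Lemma neg_part_sub (a b : nat) : neg_part (a%:Z - b%:Z) = (b - a)%N.
Proof.
rewrite /neg_part; case: ltrP => ab; last by apply/esym/eqP; rewrite subn_eq0; lia.
by rewrite -opprB abszN subzn ?absz_nat //; lia.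
Qed.

Lemma neg_partK (x : int) : (0 < neg_part x)%N -> x + (neg_part x)%:Z = 0.
Proof. by rewrite /neg_part; case: ltrP => // x0 _; rewrite abszE ltr0_norm // subrr. Qed.

Section Depth.
Variables (n j : nat) (u : 'I_n -> int).

Definition depth : nat := \max_(i < n | (i < j)%N) neg_part (u i).

Lemma depth_ge (i : 'I_n) : (i < j)%N -> - u i <= depth%:Z.
Proof.
by move=> ij; apply: le_trans (neg_part_ge _) _; rewrite lez_nat (leq_bigmax_cond _ ij).
Qed.

Lemma depth_le (A : rat) : 0 <= A ->
  (forall i : 'I_n, (i < j)%N -> - (u i)%:~R <= A) -> depth%:R <= A.
Proof.
move=> A0 uA; apply: (big_ind (fun x : nat => x%:R <= A)) => // [x y|i ij].
  by rewrite /maxn; case: ifP.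
rewrite /neg_part; case: ltrP => // ui0.
by rewrite natr_absz ltr0_norm // intrN uA.
Qed.

Lemma depth_attained : (0 < depth)%N -> exists2 i : 'I_n, (i < j)%N & neg_part (u i) = depth.
Proof.
case: (pickP (fun i : 'I_n => (i < j)%N)) => [i0 i0j _ | none]; last first.
  by rewrite /depth big_pred0.
rewrite /depth (bigop.bigmax_eq_arg i0 i0j).
by case: (@arg_maxnP _ i0 (fun i : 'I_n => (i < j)%N) _ i0j) => i ij _; exists i.
Qed.
End Depth.

Section Level.
Variables (n m j : nat) (u : 'I_n -> int).

(* The necessary sign condition: the coordinates not involved in the monomial
   (x_1 ... x_j)^{-1} are nonnegative. *)
Definition tail_nonneg : Prop := forall i : 'I_n, (j <= i)%N -> 0 <= u i.

(* m times the weight of u (weight_level). *)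
Definition level : rat := \sum_(i < n) (u i)%:~R + (depth j u)%:R * (m%:R + j%:R).

Definition lifted (i : 'I_n) : int := u i + (if (i < j)%N then depth j u else 0%N)%:Z.

Lemma lifted_ge0 : tail_nonneg -> forall i, 0 <= lifted i.
Proof.
move=> tail i; rewrite /lifted; case: ifP => ij; last by rewrite addr0 tail // leqNgt ij.
by have := depth_ge u ij; lia.
Qed.

Lemma liftedE i : (lifted i)%:~R = (u i)%:~R + prefix_ind j i * (depth j u)%:R :> rat.
Proof. by rewrite /lifted intrD /prefix_ind; case: ifP; rewrite ?mul1r ?mul0r. Qed.

Hypothesis jn : (j <= n)%N.

Lemma levelE : level = \sum_(i < n) (lifted i)%:~R + (depth j u)%:R * m%:R.
Proof.
rewrite /level (eq_bigr _ (fun i _ => liftedE i)) big_split /= -mulr_suml.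
by rewrite sum_prefix_ind //; ring.
Qed.

Lemma level_ge0 : tail_nonneg -> 0 <= level.
Proof.
move=> tail; rewrite levelE addr_ge0 ?mulr_ge0 //.
by apply: sumr_ge0 => i _; rewrite ler0z lifted_ge0.
Qed.

(* Membership in c * Delta forces the sign condition and level <= c * m: the depth is
   at most c times the coefficient of the vertex -(e_1 + ... + e_j). *)
Lemma in_scaled_Delta_level (c : rat) : 0 <= c ->
  in_scaled_Delta n m j c (fun i => (u i)%:~R) -> tail_nonneg /\ level <= c * m%:R.
Proof.
move=> c0 [a0 [am [a [a00 am0 a_ge0 sum_a uE]]]].
have {}uE i : (u i)%:~R = - (c * am) * prefix_ind j i + c * m%:R * a i.
  by rewrite uE /prefix_ind; case: ifP => _; ring.
split=> [i ji|].
  by rewrite -(ler0z rat) uE /prefix_ind ltnNge ji mulr0 add0r !mulr_ge0.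
have depth_le_am : (depth j u)%:R <= c * am.
  apply: depth_le; first exact: mulr_ge0.
  move=> i ij; rewrite uE /prefix_ind ij mulr1.
  have : 0 <= c * m%:R * a i by rewrite !mulr_ge0.
  lra.
rewrite /level (eq_bigr _ (fun i _ => uE i)) big_split /= -!mulr_sumr sum_prefix_ind //.
have -> : \sum_(i < n) a i = 1 - a0 - am by lra.
have : (depth j u)%:R * (m%:R + j%:R) <= c * am * (m%:R + j%:R).
  by rewrite ler_wpM2r // addr_ge0.
have : 0 <= c * m%:R * a0 by rewrite !mulr_ge0.
nra.
Qed.

Hypothesis m_gt0 : (0 < m)%N.

Lemma level_in_scaled_Delta (c : rat) : tail_nonneg -> 0 <= c ->
  level <= c * m%:R -> in_scaled_Delta n m j c (fun i => (u i)%:~R).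
Proof.
move=> tail c0; rewrite levelE; set t : rat := (depth j u)%:R => lev_le.
have m0 : 0 < m%:R :> rat by rewrite ltr0n.
have t0 : 0 <= t by rewrite ler0n.
have lifted0 i : 0 <= (lifted i)%:~R :> rat by rewrite ler0z lifted_ge0.
have sum0 : 0 <= \sum_(i < n) (lifted i)%:~R :> rat by apply: sumr_ge0.
have [c_eq0|c_neq0] := eqVneq c 0.
  rewrite c_eq0 mul0r in lev_le.
  have t_eq0 : t = 0 by nra.
  have /psumr_eq0P lifted_eq0 : \sum_(i < n) (lifted i)%:~R = 0 :> rat by nra.
  exists 1, 0, (fun=> 0); split=> //=; first by rewrite big1 // !addr0.
  move=> i; have := lifted_eq0 (fun i _ => lifted0 i) i isT.
  by rewrite liftedE -/t t_eq0 mulr0 addr0 c_eq0 mul0r => ->.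
have c_gt0 : 0 < c by rewrite lt_def c_neq0 c0.
pose a i := (lifted i)%:~R / (c * m%:R).
exists (1 - t / c - \sum_(i < n) a i), (t / c), a; split.
- have -> : t / c = (t * m%:R) / (c * m%:R) by field; rewrite c_neq0 lt0r_neq0.
  have : (t * m%:R + \sum_(i < n) (lifted i)%:~R) / (c * m%:R) <= 1.
    by rewrite ler_pdivrMr ?mulr_gt0 // mul1r; lra.
  by rewrite -mulr_suml mulrDl; lra.
- exact: divr_ge0.
- by move=> i; apply: divr_ge0 (lifted0 i) _; rewrite mulr_ge0 // ltW.
- ring.
- by move=> i; rewrite /a liftedE /prefix_ind; case: ifP => _; field; rewrite c_neq0 lt0r_neq0.
Qed.

Lemma weight_level (k : nat) :
  weight_is n m j u (k%:R / m%:R) <-> tail_nonneg /\ level = k%:R.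
Proof.
have m0 : 0 < m%:R :> rat by rewrite ltr0n.
have km : k%:R / m%:R * m%:R = k%:R :> rat by rewrite divfK ?lt0r_neq0.
have km0 : 0 <= k%:R / m%:R :> rat by rewrite divr_ge0 // ltW.
split=> [[_ uk k_min] | [tail lev]].
  have [tail lev_le] := in_scaled_Delta_level km0 uk; rewrite km in lev_le.
  split=> //; have lev_m0 : 0 <= level / m%:R by rewrite divr_ge0 ?level_ge0 // ltW.
  have := k_min _ lev_m0 (level_in_scaled_Delta tail lev_m0 _).
  by rewrite divfK ?lt0r_neq0 // ler_pM2r ?invr_gt0 // => /(_ (lexx _)); lra.
split=> //; first by apply: level_in_scaled_Delta; rewrite ?km ?lev.
move=> c c0 /(in_scaled_Delta_level c0)[_].
by rewrite -lev ler_pdivrMr.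
Qed.
End Level.

Section Parametrization.
Variables (n m j k : nat).

Definition point_of (p : nat * seq nat) : {ffun 'I_n -> int} :=
  [ffun i : 'I_n => (nth 0%N p.2 i)%:Z - (if (i < j)%N then p.1 else 0%N)%:Z].

(* t is the actual depth of [point_of (t, w)]: either t = 0 or some of the first j
   parts of w vanishes. *)
Definition exact_depth (t : nat) (w : seq nat) : bool := (t == 0%N) || ~~ pos_prefix j w.

Definition params : seq (nat * seq nat) :=
  [seq (t, w) | t <- iota 0 (k %/ m).+1, w <- filter (exact_depth t) (comps n (k - t * m))].

Lemma depth_point_of t w : size w = n -> exact_depth t w -> depth j (point_of (t, w)) = t.
Proof.
move=> sw t_exact; apply/eqP; rewrite eqn_leq; apply/andP; split.
  by apply/bigmax_leqP => i ij; rewrite ffunE /= ij neg_part_sub leq_subr.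
case/orP: t_exact => [/eqP-> //|/allPn[x /(nthP 0%N)[i]]].
rewrite size_take_min ltn_min sw => /andP[ij i_lt_n] <-; rewrite lt0n negbK nth_take //.
move=> /eqP wi0; apply: leq_trans (leq_bigmax_cond (Ordinal i_lt_n) ij).
by rewrite /point_of ffunE /= ij wi0 neg_part_sub subn0.
Qed.

Lemma mem_params p : (p \in params) =
  [&& (p.1 <= k %/ m)%N, p.2 \in comps n (k - p.1 * m) & exact_depth p.1 p.2].
Proof.
case: p => t w /=; apply/allpairsPdep/idP => [[t' [w' [+ + [-> ->]]]]|/and3P[tk wc tw]].
  by rewrite mem_iota mem_filter => tk /andP[-> ->]; rewrite andbT; lia.
by exists t, w; rewrite mem_iota mem_filter tw wc; split=> //; lia.
Qed.

Lemma uniq_params : uniq params.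
Proof.
apply: allpairs_uniq_dep => [|t _|[t w] [t' w'] _ _ /= [-> ->]] //.
  exact: iota_uniq.
exact/filter_uniq/uniq_comps.
Qed.

Lemma size_params : size params =
  (\sum_(0 <= t < (k %/ m).+1) count (exact_depth t) (comps n (k - t * m)))%N.
Proof.
rewrite size_allpairs_dep sumnE big_map; apply: eq_bigr => t _.
by rewrite size_filter.
Qed.

Hypotheses (m_gt0 : (0 < m)%N) (jn : (j <= n)%N).

Lemma point_of_weight p : p \in params ->
  tail_nonneg j (point_of p) /\ level m j (point_of p) = k%:R.
Proof.
case: p => t w; rewrite mem_params mem_comps /= => /and3P[tk /andP[/eqP sw /eqP sumw] t_exact].
split=> [i ji|]; first by rewrite ffunE /= ltnNge ji subr0.
have tmk : (t * m <= k)%N by rewrite -leq_divRL.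
rewrite /level depth_point_of // (eq_bigr (fun i : 'I_n => (nth 0%N w i)%:R - prefix_ind j i * t%:R)).
  rewrite sumrB -mulr_suml sum_prefix_ind // -natr_sum -sw -sumn_nth sumw natrB // natrM.
  ring.
by move=> i _; rewrite ffunE /= intrB /prefix_ind; case: ifP; rewrite ?mul1r ?mul0r.
Qed.

Lemma point_of_inj : {in params &, injective point_of}.
Proof.
move=> [t w] [t' w']; rewrite !mem_params !mem_comps /=.
move=> /and3P[_ /andP[/eqP sw _] t_exact] /and3P[_ /andP[/eqP sw' _] t'_exact] eq_points.
have eq_t : t' = t.
  by rewrite -(depth_point_of sw t_exact) -(depth_point_of sw' t'_exact) eq_points.
subst t'.
congr (_, _); apply: (@eq_from_nth _ 0%N) => [|i]; first by rewrite sw sw'.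
rewrite sw => i_lt_n; have := congr1 (fun f : {ffun 'I_n -> int} => f (Ordinal i_lt_n)) eq_points.
by rewrite !ffunE /= => /addIr [].
Qed.

Definition comp_of (u : 'I_n -> int) : seq nat := [seq `|lifted j u i|%N | i <- enum 'I_n].

Lemma nth_comp_of u (i : 'I_n) : nth 0%N (comp_of u) i = `|lifted j u i|%N.
Proof. by rewrite (nth_map i) ?size_enum_ord // nth_ord_enum. Qed.

Lemma size_comp_of u : size (comp_of u) = n.
Proof. by rewrite size_map size_enum_ord. Qed.

Lemma point_ofK (u : {ffun 'I_n -> int}) : tail_nonneg j u -> point_of (depth j u, comp_of u) = u.
Proof.
move=> tail; apply/ffunP => i; rewrite !ffunE /= nth_comp_of gez0_abs ?lifted_ge0 //.
by rewrite /lifted addrK.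
Qed.

Lemma comp_of_params u : tail_nonneg j u -> level m j u = k%:R ->
  (depth j u, comp_of u) \in params.
Proof.
move=> tail lev; set t := depth j u.
have sum_comp : (sumn (comp_of u) + t * m)%N = k.
  apply/eqP; rewrite -(eqr_nat rat) -lev levelE // natrD natrM sumn_nth size_comp_of natr_sum.
  apply/eqP; congr (_ + _); apply: eq_bigr => i _.
  by rewrite nth_comp_of natr_absz ger0_norm ?lifted_ge0.
rewrite mem_params mem_comps /= size_comp_of eqxx /=; apply/and3P; split.
- by rewrite leq_divRL //; lia.
- by apply/eqP; lia.
rewrite /exact_depth; case: posnP => [//|t_gt0] /=; apply/allPn.
have [i ij ui_neg] := depth_attained t_gt0.
have ltn_i : (i < size (take j (comp_of u)))%N by rewrite size_take_min ltn_min ij size_comp_of ltn_ord.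
exists (nth 0%N (take j (comp_of u)) i); first exact: mem_nth.
by rewrite nth_take // nth_comp_of /lifted ij -ui_neg neg_partK ?ui_neg.
Qed.
End Parametrization.

Lemma binomZ_small (a b : int) : a < b -> binomZ a b = 0.
Proof. by rewrite /binomZ => ->; rewrite orbT. Qed.

Lemma binomZ_neg (a b : int) : a < 0 -> binomZ a b = 0.
Proof. by move=> a0; rewrite /binomZ; case: ltP => //= b0; rewrite (lt_le_trans a0 b0). Qed.

Lemma binomZ_nat (a b : nat) : binomZ a%:Z b%:Z = ('C(a, b))%:Z.
Proof. by rewrite /binomZ ltz_nat /=; case: ltnP => // ab; rewrite bin_small. Qed.

Lemma binom_split n' j r :
  ('C(j + r, n') = 'C(r, n') + \sum_(1 <= s < n'.+1) 'C(j, s) * 'C(r, n' - s))%N.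
Proof.
by rewrite -binomial.Vandermonde big_ord_recl bin0 mul1n subn0 big_add1 big_mkord.
Qed.

Lemma Posz_sum (I : Type) (r : seq I) (P : pred I) (F : I -> nat) :
  (\sum_(i <- r | P i) F i)%N%:Z = \sum_(i <- r | P i) (F i)%:Z.
Proof. exact: (big_morph Posz PoszD). Qed.

Section ShellCount.
Variables (n' j : nat).
Hypotheses (j_gt0 : (0 < j)%N) (jn : (j <= n'.+1)%N).
Local Notation n := n'.+1.

(* The contribution of one multiple l of m in the formula of the statement, as a
   function of the remainder N = k - l * m. *)
Definition shell_term (N : nat) : int :=
  \sum_(1 <= s < j.+1) beta n j s * binomZ (N%:Z + (n%:Z - j%:Z - 1)) (n%:Z - s%:Z - 1)
  + (if (j == n) && (N == 0%N) then 1 else 0).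

Lemma beta_binomZ N s : (1 <= s < j.+1)%N -> (j < n)%N || (0 < N)%N ->
  beta n j s * binomZ (N%:Z + (n%:Z - j%:Z - 1)) (n%:Z - s%:Z - 1)
  = (if s < n then 'C(j, s) * 'C(N + n' - j, n' - s) else 0)%N%:Z.
Proof.
move=> /andP[s_gt0 sj] jN; case: ltnP => sn.
  have jNn : (j <= N + n')%N by case/orP: jN; lia.
  have -> : N%:Z + (n%:Z - j%:Z - 1) = (N + n' - j)%N%:Z by lia.
  have -> : n%:Z - s%:Z - 1 = (n' - s)%N%:Z by lia.
  by rewrite binomZ_nat /beta (_ : s == n = false) ?andbF ?PoszM //; apply/negbTE; lia.
have [-> ->] : s = n /\ j = n by lia.
by rewrite /beta !eqxx mul0r.
Qed.

Lemma sum_beta_binomZ N : (j < n)%N || (0 < N)%N ->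
  \sum_(1 <= s < j.+1) beta n j s * binomZ (N%:Z + (n%:Z - j%:Z - 1)) (n%:Z - s%:Z - 1)
  = (\sum_(1 <= s < n) 'C(j, s) * 'C(N + n' - j, n' - s))%N%:Z.
Proof.
move=> jN; rewrite (eq_big_nat _ _ (fun s js => beta_binomZ js jN)).
rewrite -Posz_sum; congr Posz.
pose g s := (if (s < n)%N then 'C(j, s) * 'C(N + n' - j, n' - s) else 0)%N.
transitivity (\sum_(1 <= s < n.+1) g s)%N.
  rewrite [RHS](big_cat_nat _ (n := j.+1)) //= [X in (_ = _ + X)%N]big1_seq => [|s].
    by rewrite addn0.
  by rewrite mem_index_iota => /andP[_ /andP[js _]]; rewrite /g bin_small // mul0n if_same.
by rewrite big_nat_recr //= /g ltnn addn0; apply: eq_big_nat => s /andP[_ ->].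
Qed.

(* The shell term counts compositions of N with a vanishing part among the first j. *)
Lemma shell_termE N : shell_term N =
  ('C(N + n', n'))%:Z - (if (j <= N)%N then 'C(N - j + n', n') else 0%N)%:Z.
Proof.
rewrite /shell_term; case: ifPn => [/andP[/eqP jE /eqP NE] | jN].
  rewrite big1 => [|s _]; last by rewrite binomZ_neg ?mulr0 // NE jE; lia.
  by rewrite NE jE binn add0r ltn0 subr0.
have {}jN : (j < n)%N || (0 < N)%N by move: jN; rewrite negb_and; lia.
have jNn : (j <= N + n')%N by case/orP: jN; lia.
rewrite sum_beta_binomZ // addr0.
have := binom_split n' j (N + n' - j); rewrite subnKC // => ->.
suff -> : 'C(N + n' - j, n') = (if (j <= N)%N then 'C(N - j + n', n') else 0%N).
  by rewrite PoszD addrAC subrr add0r.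
by case: leqP => jN'; [rewrite addnBAC | rewrite bin_small //; lia].
Qed.

Lemma count_exact_depth0 N : count (exact_depth j 0) (comps n N) = 'C(N + n', n').
Proof. by rewrite (eq_count (a2 := predT)) // count_predT size_comps. Qed.

Lemma count_exact_depth t N : (0 < t)%N ->
  (count (exact_depth j t) (comps n N))%:Z = shell_term N.
Proof.
move=> t_gt0; rewrite shell_termE -!size_comps -count_pos_prefix //.
rewrite -(count_predC (pos_prefix j)) PoszD addrAC subrr add0r; congr Posz.
by apply: eq_count => w; rewrite /exact_depth gtn_eqF.
Qed.
End ShellCount.


Lemma alphaE n m j k : (0 < m)%N -> alpha n m j k =
  \sum_(0 <= l < k %/ m) (if (j == n) && (k - l.+1 * m == 0)%N then 1 else 0).
Proof.
move=> m_gt0; rewrite /alpha; case: eqP => [_|_] /=; last by rewrite big1.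
have [K0|K_gt0] := posnP (k %/ m).
  rewrite K0 big_geq //; case: ifP => // /andP[k_gt0 /dvdnP[q kE]].
  by rewrite kE mulnK // in K0; rewrite kE K0 in k_gt0.
rewrite -(prednK K_gt0) big_nat_recr //= big1_seq => [|l]; last first.
  rewrite mem_index_iota => /andP[_ lK]; suff : (l.+1 * m < k)%N.
    by rewrite -subn_gt0 lt0n => /negbTE ->.
  have : (l.+2 * m <= k)%N by rewrite -leq_divRL // -(prednK K_gt0).
  by rewrite mulSn; lia.
have k_gt0 : (0 < k)%N by move: K_gt0; rewrite divn_gt0 //; lia.
by rewrite add0r prednK // subn_eq0 k_gt0 dvdn_eq eqn_leq leq_divM.
Qed.

Lemma sum_binomZ_multiples n m j k s : (0 < m)%N -> (k %/ m <= n)%N -> (s <= j)%N ->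
  \sum_(1 <= l < n.+1) binomZ (k%:Z - (l * m)%:Z + (n%:Z - j%:Z - 1)) (n%:Z - s%:Z - 1)
  = \sum_(0 <= t < k %/ m) binomZ ((k - t.+1 * m)%N%:Z + (n%:Z - j%:Z - 1)) (n%:Z - s%:Z - 1).
Proof.
move=> m_gt0 Kn sj; rewrite big_add1 /= (big_cat_nat _ (n := k %/ m)) //=.
rewrite [X in _ + X]big1_seq ?addr0 => [|l].
  by apply: eq_big_nat => t /andP[_ tK]; rewrite -subzn // -leq_divRL.
move=> /andP[_]; rewrite mem_index_iota => /andP[Kl _].
have kl : (k < l.+1 * m)%N by rewrite -ltn_divLR // ltnS.
by rewrite binomZ_small //; move: kl; set L := (l.+1 * m)%N; lia.
Qed.

Lemma size_params_formula n m j k :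
  (1 <= n)%N -> (0 < m)%N -> (1 <= j <= n)%N -> (k <= n * m)%N ->
  (size (params n m j k))%:Z =
    binomZ (n%:Z - 1 + k%:Z) (n%:Z - 1)
    + \sum_(1 <= s < j.+1) beta n j s *
        \sum_(1 <= l < n.+1) binomZ (k%:Z - (l * m)%:Z + (n%:Z - j%:Z - 1)) (n%:Z - s%:Z - 1)
    + alpha n m j k.
Proof.
case: n => // n' _ m_gt0 /andP[j_gt0 jn] k_le.
have K_le : (k %/ m <= n'.+1)%N by rewrite -ltnS ltn_divLR // mulSn; lia.
rewrite size_params Posz_sum big_nat_recl // mul0n subn0 count_exact_depth0.
under eq_bigr do rewrite count_exact_depth //.
have -> : n'.+1%:Z - 1 = n' by lia.
rewrite -PoszD binomZ_nat addnC -addrA alphaE //; congr (_ + _).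
rewrite /shell_term big_split /=; congr (_ + _); symmetry.
under eq_big_nat => s /andP[_ sj] do rewrite sum_binomZ_multiples // mulr_sumr.
by rewrite exchange_big.
Qed.

Theorem proposition4p6 (n m j k : nat) :
  (1 <= n)%N -> (1 <= m)%N -> (1 <= j <= n)%N -> (k <= n * m)%N ->
  W_Delta_is n m j k
    (binomZ (n%:Z - 1 + k%:Z) (n%:Z - 1)
     + \sum_(1 <= s < j.+1)
         beta n j s *
         \sum_(1 <= l < n.+1)
           binomZ (k%:Z - (l * m)%:Z + (n%:Z - j%:Z - 1)) (n%:Z - s%:Z - 1)
     + alpha n m j k).
Proof.
move=> n_gt0 m_gt0 j_range k_le; have /andP[_ jn] := j_range.
exists (map (point_of n j) (params n m j k)); split.
- by rewrite map_inj_in_uniq ?uniq_params //; apply: point_of_inj.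
- move=> u; rewrite weight_level //; split=> [/mapP[p p_params ->] | [tail lev]].
    exact: point_of_weight.
  by rewrite -(point_ofK tail); apply/map_f/comp_of_params.
- by rewrite size_map size_params_formula.
Qed.
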